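(* Let $l\subset[0,1]$ be a compact set that is super sparse near every $a\in l$. Then the modified Assouad dimension of $l$ is $0$. The converse fails in general (e.g. $\{0\}\cup\{2^{-k}:k\ge1\}$ has modified Assouad dimension $0$ but is not sparse near $0$).
   Context: For a compact set $l\subset\mathbb{R}$ let $W(l)=\{k\in\mathbb{N}: l\cap([2^{-k-1},2^{-k}]\cup[-2^{-k},-2^{-k-1}])\neq\emptyset\}$, and for $a\in l$ let $W(l,a)=W(l-a)$; $l$ is super sparse near $a$ if $W(l,a)$ has upper Banach density $\limsup_{N\to\infty}\sup_{k\in\mathbb{N}}\#(W(l,a)\cap[k+1,k+N])/N=0$, and sparse near $a$ if its upper natural density is $0$. The Assouad dimension $\dim_{\mathrm A}F$ is the infimum of $s\ge0$ such that there is $C>0$ with $N(B(x,R)\cap F,r)\le C(R/r)^s$ for all $0<r<R$ and $x\in F$ ($N(E,r)$ = minimal number of $r$-intervals covering $E$). The modified Assouad dimension is $\inf\{\sup_i\dim_{\mathrm A}F_i: F\subset\bigcup_{i\in\mathbb{N}}F_i\}$. *)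

From Stdlib Require Import Reals Lra List Classical ClassicalEpsilon.
Open Scope R_scope.

Definition W (l : R -> Prop) (a : R) (k : nat) : Prop :=
  exists y, l y /\ (/2) ^ (S k) <= Rabs (y - a) <= (/2) ^ k.

Definition ind (P : Prop) : R :=
  if excluded_middle_informative P then 1 else 0.

(* #(A ∩ [k+1, k+N]) *)
Fixpoint countW (A : nat -> Prop) (k N : nat) : R :=
  match N with
  | O => 0
  | S N' => countW A k N' + ind (A (k + N)%nat)
  end.

(* upper Banach density 0:
   limsup_{N->oo} sup_k #(A ∩ [k+1,k+N])/N = 0  (quantities are >= 0) *)
Definition upper_banach_density_zero (A : nat -> Prop) : Prop :=
  forall eps, 0 < eps -> exists N0 : nat, forall N k : nat, (N0 <= N)%nat ->
    (0 < N)%nat -> countW A k N / INR N <= eps.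

Definition upper_natural_density_zero (A : nat -> Prop) : Prop :=
  forall eps, 0 < eps -> exists N0 : nat, forall N : nat, (N0 <= N)%nat ->
    (0 < N)%nat -> countW A 0 N / INR N <= eps.

Definition super_sparse_near (l : R -> Prop) (a : R) : Prop :=
  upper_banach_density_zero (W l a).

Definition sparse_near (l : R -> Prop) (a : R) : Prop :=
  upper_natural_density_zero (W l a).

Definition covers (E : R -> Prop) (r : R) (n : nat) : Prop :=
  exists xs : list R, length xs = n /\
    forall y, E y -> exists x, In x xs /\ x <= y <= x + r.

(* s is admissible in the definition of the Assouad dimension of F:
   N(B(x,R) ∩ F, r) <= C (R/r)^s for all 0<r<R, x in F *)
Definition assouad_admissible (F : R -> Prop) (s : R) : Prop :=
  0 <= s /\ exists C, 0 < C /\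
    forall x r Rr, F x -> 0 < r -> r < Rr ->
      exists n, covers (fun y => F y /\ Rabs (y - x) <= Rr) r n /\
                INR n <= C * Rpower (Rr / r) s.

Definition is_glb (S : R -> Prop) (m : R) : Prop :=
  (forall x, S x -> m <= x) /\
  (forall m', (forall x, S x -> m' <= x) -> m' <= m).

(* dim_A F = d  (for F ⊆ R this infimum is always a real number in [0,1]) *)
Definition assouad_dim (F : R -> Prop) (d : R) : Prop :=
  is_glb (assouad_admissible F) d.

(* modified Assouad dimension of F equals d:
   d = inf { sup_i dim_A F_i : F ⊆ ⋃_i F_i } *)
Definition mod_assouad_dim (F : R -> Prop) (d : R) : Prop :=
  is_glb (fun t => exists Fi : nat -> R -> Prop,
             (forall x, F x -> exists i, Fi i x) /\
             is_lub (fun u => exists i, assouad_dim (Fi i) u) t) d.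

Definition dyadic_set (x : R) : Prop :=
  x = 0 \/ exists k : nat, (1 <= k)%nat /\ x = (/2) ^ k.

From Pilot Require Import Defs.
From Stdlib Require Import Reals Lra Lia List Classical ClassicalEpsilon.
Import ListNotations.
Open Scope R_scope.

(* For d > 0 pick x > 0 small and M large with
   1 + 2x <= 2^(d/2) and 1/x <= 2^(dM/2).  The "pieces" of l, consisting of
   the points a whose scale set W(l, a) has density <= 1/M on all windows of
   length >= N0, cover l as N0 ranges over nat, and each piece admits the
   Assouad exponent d.  The heart of this is a covering estimate for
   "clusters" (points q of l near p with at most b scales of W(l, q) in a
   window of n scales): 2 x^-b (1+2x)^n intervals suffice, by induction on
   n, since points in the outermost dyadic shell around p see p at that scale
   and so spend one of their b scales.  A general criterion then turns such
   countable covers into modified Assouad dimension 0.  For the dyadic set {0} U {2^-k}, the criterion applies to its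
   countably many points, while every scale is occupied near 0. *)

(* [cnt A j n] counts the i in [j, j+n) with A i; it is the counting function
   of Defs with a more convenient recursion. *)
Fixpoint cnt (A : nat -> Prop) (j n : nat) : nat :=
  match n with
  | O => O
  | S n' =>
      ((if excluded_middle_informative (A j) then 1 else 0) + cnt A (S j) n')%nat
  end.

Lemma cnt_tail_le A j n : (cnt A (S j) n <= cnt A j (S n))%nat.
Proof. simpl. lia. Qed.

Lemma cnt_head_le A j n : (cnt A j (S n) <= S (cnt A (S j) n))%nat.
Proof. simpl. destruct (excluded_middle_informative (A j)); lia. Qed.

Lemma cnt_head A j n : A j -> cnt A j (S n) = S (cnt A (S j) n).
Proof. intro hA. simpl. destruct (excluded_middle_informative (A j)); tauto. Qed.

Lemma cnt_mono A j n m : (n <= m)%nat -> (cnt A j n <= cnt A j m)%nat.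
Proof.
  revert j m. induction n as [|n IH]; intros j m hnm; simpl; [lia|].
  destruct m as [|m]; [lia|]. simpl. specialize (IH (S j) m ltac:(lia)). lia.
Qed.

Lemma cnt_snoc A j n :
  cnt A j (S n) = (cnt A j n + if excluded_middle_informative (A (j + n)%nat) then 1 else 0)%nat.
Proof.
  revert j. induction n as [|n IH]; intro j.
  - rewrite Nat.add_0_r. simpl. lia.
  - change (cnt A j (S (S n))) with
      ((if excluded_middle_informative (A j) then 1 else 0) + cnt A (S j) (S n))%nat.
    rewrite IH. replace (S j + n)%nat with (j + S n)%nat by lia.
    change (cnt A j (S n)) with
      ((if excluded_middle_informative (A j) then 1 else 0) + cnt A (S j) n)%nat.
    lia.
Qed.

Lemma countW_cnt A k N : countW A k N = INR (cnt A (S k) N).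
Proof.
  induction N as [|N IH]; [reflexivity|].
  simpl countW. rewrite cnt_snoc, plus_INR, IH. unfold Defs.ind.
  replace (k + S N)%nat with (S k + N)%nat by lia.
  destruct (excluded_middle_informative (A (S k + N)%nat)); simpl; lra.
Qed.

Definition coverable (E : R -> Prop) (r c : R) : Prop :=
  exists n, covers E r n /\ INR n <= c.

Lemma coverable_weaken (E E' : R -> Prop) (r r' c c' : R) :
  (forall y, E y -> E' y) -> r' <= r -> c' <= c ->
  coverable E' r' c' -> coverable E r c.
Proof.
  intros hsub hr hc [n [[xs [hlen hcov]] hn]].
  exists n. split; [|lra]. exists xs. split; [exact hlen|].
  intros y hy. destruct (hcov y (hsub y hy)) as [z [hz hzy]].
  exists z. split; [exact hz | lra].
Qed.

Lemma coverable_union (A B : R -> Prop) (r c1 c2 : R) :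
  coverable A r c1 -> coverable B r c2 -> coverable (fun y => A y \/ B y) r (c1 + c2).
Proof.
  intros [n1 [[xs1 [hl1 hc1]] hn1]] [n2 [[xs2 [hl2 hc2]] hn2]].
  exists (n1 + n2)%nat. split.
  - exists (xs1 ++ xs2). split; [rewrite length_app; lia|].
    intros y [hy | hy].
    + destruct (hc1 y hy) as [z [hz hzy]]. exists z. split; [apply in_or_app; auto | exact hzy].
    + destruct (hc2 y hy) as [z [hz hzy]]. exists z. split; [apply in_or_app; auto | exact hzy].
  - rewrite plus_INR. lra.
Qed.

Lemma coverable_ball (p r : R) : coverable (fun y => Rabs (y - p) <= r) r 2.
Proof.
  exists 2%nat. split; [|simpl; lra].
  exists [p - r; p]. split; [reflexivity|].
  intros y hy. destruct (Rle_dec p y).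
  - exists p. split; [simpl; auto | split_Rabs; lra].
  - exists (p - r). split; [simpl; auto | split_Rabs; lra].
Qed.

Lemma coverable_unit_interval (E : R -> Prop) (r : R) :
  (forall y, E y -> 0 <= y <= 1) -> 1 <= r -> coverable E r 1.
Proof.
  intros h01 hr. exists 1%nat. split; [|simpl; lra].
  exists [0]. split; [reflexivity|].
  intros y hy. exists 0. split; [simpl; auto | specialize (h01 y hy); lra].
Qed.

Lemma coverable_from_point (E : R -> Prop) (r c : R) :
  0 <= c -> (forall q, E q -> coverable E r c) -> coverable E r c.
Proof.
  intros hc hE. destruct (classic (exists q, E q)) as [[q hq] | hempty].
  - exact (hE q hq).
  - exists 0%nat. split; [|simpl; lra].
    exists nil. split; [reflexivity|].
    intros y hy. exfalso. apply hempty. exists y. exact hy.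
Qed.

Lemma half_pos (i : nat) : 0 < (/2)^i.
Proof. apply pow_lt. lra. Qed.

Lemma half_S (i : nat) : (/2)^(S i) = (/2)^i / 2.
Proof. simpl. lra. Qed.

Lemma half_anti (a m : nat) : (/2)^(a + m) <= (/2)^a.
Proof.
  induction m as [|m IH]; [rewrite Nat.add_0_r; lra|].
  rewrite Nat.add_succ_r, half_S. pose proof (half_pos (a + m)). lra.
Qed.

Lemma dyadic_shell (t : R) : 0 < t <= 1 -> exists j, (/2)^(S j) < t <= (/2)^j.
Proof.
  intros ht. destruct (pow_lt_1_zero (/2) ltac:(rewrite Rabs_pos_eq; lra) t (proj1 ht))
    as [N hN].
  specialize (hN N (le_n N)). rewrite Rabs_pos_eq in hN by (left; apply half_pos).
  clear - ht hN. induction N as [|N IH]; [simpl in hN; lra|].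
  destruct (Rlt_le_dec ((/2)^N) t) as [h | h].
  - exact (IH h).
  - exists N. lra.
Qed.

Section SparseClusters.

Variable l : R -> Prop.

Lemma W_witness (p q : R) (j : nat) :
  l p -> (/2)^(S j) <= Rabs (q - p) <= (/2)^j -> W l q j.
Proof. intros hp hd. exists p. split; [exact hp | rewrite Rabs_minus_sym; exact hd]. Qed.

Definition cluster (p : R) (j n b : nat) (q : R) : Prop :=
  l q /\ Rabs (q - p) <= (/2)^j /\ (cnt (W l q) j n <= b)%nat.

(* A cluster point in the outer shell around p sees p at scale j, which uses
   up one of its b scales. *)
Lemma shell_count (p q : R) (j n b : nat) :
  l p -> (/2)^(S j) < Rabs (q - p) -> cluster p j (S n) b q ->
  (S (cnt (W l q) (S j) n) <= b)%nat.
Proof.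
  intros hp hshell [_ [hball hcnt]].
  rewrite <- cnt_head; [exact hcnt|]. apply (W_witness p); [exact hp | lra].
Qed.

Lemma same_side_close (p q0 q h s : R) :
  s = 1 \/ s = -1 -> Rabs (q0 - p) <= 2 * h -> Rabs (q - p) <= 2 * h ->
  h < s * (q0 - p) -> h < s * (q - p) -> Rabs (q - q0) <= h.
Proof. intros [-> | ->] h0 h1 h2 h3; split_Rabs; lra. Qed.

Lemma shell_side_in_cluster (p q0 q s : R) (j n b : nat) :
  l p -> s = 1 \/ s = -1 ->
  cluster p j (S n) (S b) q0 -> (/2)^(S j) < s * (q0 - p) ->
  cluster p j (S n) (S b) q -> (/2)^(S j) < s * (q - p) ->
  cluster q0 (S j) n b q.
Proof.
  intros hp hs hq0 hs0 hq hsq.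
  assert (hshell : (/2)^(S j) < Rabs (q - p)) by (destruct hs as [-> | ->]; split_Rabs; lra).
  pose proof (shell_count p q j n (S b) hp hshell hq) as hcnt.
  destruct hq as [hlq [hball _]]. destruct hq0 as [_ [hball0 _]].
  split; [exact hlq|]. split; [|lia].
  assert (hh : (/2)^j = 2 * (/2)^(S j)) by (rewrite half_S; lra).
  apply (same_side_close p q0 q _ s hs); lra.
Qed.

Variable x : R.
Hypothesis hx : 0 < x <= 1.

(* The number of intervals needed for a cluster: the weight 1/x per spent
   scale is what makes the recursion below close up. *)
Definition cluster_bound (n b : nat) : R := 2 * (/x)^b * (1 + 2 * x)^n.

Lemma cluster_bound_nonneg (n b : nat) : 0 <= cluster_bound n b.
Proof.
  unfold cluster_bound. apply Rmult_le_pos; [apply Rmult_le_pos|apply pow_le; lra].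
  - lra.
  - apply pow_le. left. apply Rinv_0_lt_compat. lra.
Qed.

Lemma shell_side_coverable (p s : R) (j n b : nat) :
  (forall p' j' b', l p' -> coverable (cluster p' j' n b') ((/2)^(j' + n)) (cluster_bound n b')) ->
  l p -> s = 1 \/ s = -1 ->
  coverable (fun q => cluster p j (S n) b q /\ (/2)^(S j) < s * (q - p))
    ((/2)^(j + S n)) (x * cluster_bound n b).
Proof.
  intros IH hp hs. apply coverable_from_point.
  { pose proof (cluster_bound_nonneg n b). apply Rmult_le_pos; lra. }
  intros q0 [hq0 hs0]. destruct b as [|b].
  - exfalso. assert (hshell : (/2)^(S j) < Rabs (q0 - p))
      by (destruct hs as [-> | ->]; split_Rabs; lra).
    pose proof (shell_count p q0 j n 0 hp hshell hq0). lia.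
  - apply (coverable_weaken _ (cluster q0 (S j) n b) _ ((/2)^(S j + n)) _ (cluster_bound n b)).
    + intros q [hq hsq]. exact (shell_side_in_cluster p q0 q s j n b hp hs hq0 hs0 hq hsq).
    + replace (S j + n)%nat with (j + S n)%nat by lia. lra.
    + unfold cluster_bound. simpl pow. right. field. lra.
    + exact (IH q0 (S j) b (proj1 hq0)).
Qed.

(* Peeling off
   the outermost scale: points well inside form a cluster of depth n-1 at the
   next scale, points in the shell form two one-sided clusters. *)
Lemma cluster_coverable (n : nat) : forall (p : R) (j b : nat),
  l p -> coverable (cluster p j n b) ((/2)^(j + n)) (cluster_bound n b).
Proof.
  induction n as [|n IH]; intros p j b hp.
  - apply (coverable_weaken _ (fun q => Rabs (q - p) <= (/2)^j) _ ((/2)^j) _ 2).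
    + intros q [_ [hq _]]. exact hq.
    + rewrite Nat.add_0_r. lra.
    + unfold cluster_bound. simpl pow. rewrite Rmult_1_r.
      assert (hxi : 1 <= /x) by (rewrite <- Rinv_1; apply Rinv_le_contravar; lra).
      pose proof (pow_R1_Rle (/x) b hxi). lra.
    + apply coverable_ball.
  - pose proof (shell_side_coverable p 1 j n b IH hp (or_introl eq_refl)) as hright.
    pose proof (shell_side_coverable p (-1) j n b IH hp (or_intror eq_refl)) as hleft.
    pose proof (IH p (S j) b hp) as hinner.
    replace (S j + n)%nat with (j + S n)%nat in hinner by lia.
    pose proof (coverable_union _ _ _ _ _ hinner (coverable_union _ _ _ _ _ hright hleft))
      as hall.
    refine (coverable_weaken _ _ _ _ _ _ _ (Rle_refl _) _ hall).
    + intros q hq. pose proof hq as [hlq [hball hcnt]].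
      destruct (Rle_dec (Rabs (q - p)) ((/2)^(S j))) as [hin | hout].
      * left. split; [exact hlq|]. split; [exact hin|].
        pose proof (cnt_tail_le (W l q) j n). lia.
      * right. destruct (Rle_dec 0 (q - p)).
        -- left. split; [exact hq|]. rewrite Rabs_pos_eq in hout; lra.
        -- right. split; [exact hq|]. rewrite Rabs_left in hout; lra.
    + unfold cluster_bound. simpl pow. lra.
Qed.

End SparseClusters.

(* 2^(d/2): a window of n scales costs at most this factor per scale twice. *)
Definition half_dim_factor (d : R) : R := Rpower 2 (d / 2).

(* The auxiliary parameters x (weight per spent scale) and M (inverse density)
   are tuned to the target dimension d. *)
Definition tuned (d x : R) (M : nat) : Prop :=
  0 < x <= 1 /\ (0 < M)%nat /\ 1 + 2 * x <= half_dim_factor d /\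
  /x <= half_dim_factor d ^ M.

Lemma half_dim_factor_ge1 (d : R) : 0 <= d -> 1 <= half_dim_factor d.
Proof.
  intro hd. unfold half_dim_factor. rewrite <- (Rpower_O 2) by lra.
  apply Rle_Rpower; lra.
Qed.

Lemma tuned_exists (d : R) : 0 < d -> exists x M, tuned d x M.
Proof.
  intro hd. set (q := half_dim_factor d).
  assert (hq : 1 < q).
  { unfold q, half_dim_factor. rewrite <- (Rpower_O 2) at 1 by lra. apply Rpower_lt; lra. }
  set (x := Rmin 1 ((q - 1) / 2)).
  assert (hx : 0 < x <= 1).
  { unfold x. split; [apply Rmin_glb_lt; lra | apply Rmin_l]. }
  destruct (Pow_x_infinity q ltac:(rewrite Rabs_pos_eq; lra) (/x)) as [M hM].
  exists x, (S M). unfold tuned. fold q. repeat split; try lra; try lia.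
  - pose proof (Rmin_r 1 ((q - 1) / 2)) as hxq. fold x in hxq. lra.
  - specialize (hM (S M) ltac:(lia)). rewrite Rabs_pos_eq in hM by (apply pow_le; lra). lra.
Qed.

Lemma cluster_bound_estimate (d x : R) (M N0 n k : nat) :
  tuned d x M -> (M * k <= n + N0 + 1)%nat ->
  cluster_bound x n (S k) <=
  2 * /x * half_dim_factor d ^ (N0 + 1) * (half_dim_factor d * half_dim_factor d) ^ n.
Proof.
  intros [hx [_ [hxq hMq]]] hk. set (q := half_dim_factor d) in *.
  assert (hq : 1 <= q) by lra.
  assert (hxi : 0 < /x) by (apply Rinv_0_lt_compat; lra).
  assert (hweight : (/x)^k <= q^n * q^(N0 + 1)).
  { rewrite <- pow_add. apply Rle_trans with (q ^ (M * k)).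
    - rewrite pow_mult. apply pow_incr. lra.
    - apply Rle_pow; [lra | lia]. }
  assert (hgrowth : (1 + 2 * x)^n <= q^n) by (apply pow_incr; lra).
  unfold cluster_bound. rewrite Rpow_mult_distr. simpl pow.
  assert (0 <= (/x)^k) by (apply pow_le; lra).
  assert (0 <= (1 + 2 * x)^n) by (apply pow_le; lra).
  assert (0 <= q^n) by (apply pow_le; lra).
  apply Rle_trans with (2 * /x * (q^n * q^(N0 + 1)) * q^n).
  - apply Rmult_le_compat; try nra.
  - right. ring.
Qed.

Lemma dyadic_power_bound (d r R : R) (n : nat) :
  0 <= d -> 0 < r -> 2^n * r <= 4 * R ->
  Rpower 2 d ^ n <= Rpower 4 d * Rpower (R / r) d.
Proof.
  intros hd hr hn.
  assert (h2n : 0 < 2^n) by (apply pow_lt; lra).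
  assert (hR : 0 < R) by nra.
  rewrite <- Rpower_pow by apply exp_pos.
  rewrite Rpower_mult, Rmult_comm, <- Rpower_mult, Rpower_pow by lra.
  rewrite Rpower_mult_distr by (try lra; apply Rdiv_lt_0_compat; lra).
  apply Rle_Rpower_l; [exact hd|]. split; [exact h2n|].
  apply (Rmult_le_reg_r r); [exact hr|]. field_simplify; lra.
Qed.

Lemma shell_ratio (r R : R) (j k n : nat) :
  r <= (/2)^k -> (/2)^(S j) < R -> (j + n)%nat = S k -> 2^n * r <= 4 * R.
Proof.
  intros hr hR hjn.
  assert (hk : (/2)^k = 2 * (/2)^j * (/2)^n).
  { rewrite Rmult_assoc, <- pow_add, hjn. simpl. lra. }
  assert (hinv : 2^n * (/2)^n = 1).
  { rewrite <- Rpow_mult_distr. replace (2 * /2) with 1 by lra. apply pow1. }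
  assert (h2n : 0 < 2^n) by (apply pow_lt; lra).
  rewrite half_S in hR.
  apply Rle_trans with (2^n * (2 * (/2)^j * (/2)^n)).
  - rewrite <- hk. apply Rmult_le_compat_l; lra.
  - replace (2^n * (2 * (/2)^j * (/2)^n)) with (2 * (/2)^j * (2^n * (/2)^n)) by ring.
    rewrite hinv. lra.
Qed.

Section SparsePieces.

Variable l : R -> Prop.
Hypothesis l_unit : forall y, l y -> 0 <= y <= 1.

(* When l is super sparse near each of
   its points, these pieces (N0 = 0, 1, 2, ...) cover l. *)
Definition sparse_piece (M N0 : nat) (a : R) : Prop :=
  l a /\ forall N k, (N0 <= N)%nat -> (0 < N)%nat ->
    countW (W l a) k N / INR N <= / INR M.

Lemma piece_count (M N0 j n : nat) (a : R) :
  (0 < M)%nat -> sparse_piece M N0 a ->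
  (cnt (W l a) j n <= S ((n + N0 + 1) / M))%nat.
Proof.
  intros hM [_ hdens]. set (N := (n + N0 + 1)%nat).
  specialize (hdens N j ltac:(unfold N; lia) ltac:(unfold N; lia)).
  rewrite countW_cnt in hdens. set (c := cnt (W l a) (S j) N) in *.
  assert (hN : 0 < INR N) by (apply lt_0_INR; unfold N; lia).
  assert (hMr : 0 < INR M) by (apply lt_0_INR; lia).
  assert (hMc : (M * c <= N)%nat).
  { apply INR_le. rewrite mult_INR.
    apply (Rmult_le_compat_r (INR N * INR M)) in hdens; [|nra].
    replace (INR c / INR N * (INR N * INR M)) with (INR M * INR c) in hdens by (field; lra).
    replace (/ INR M * (INR N * INR M)) with (INR N) in hdens by (field; lra).
    exact hdens. }
  apply Nat.div_le_lower_bound in hMc; [|lia].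
  apply Nat.le_trans with (cnt (W l a) j (S N)).
  - apply cnt_mono. unfold N. lia.
  - pose proof (cnt_head_le (W l a) j N). lia.
Qed.

Variables (d x : R) (M N0 : nat).
Hypothesis d_nonneg : 0 <= d.
Hypothesis d_tuned : tuned d x M.

Definition piece_constant : R :=
  2 * /x * half_dim_factor d ^ (N0 + 1) * Rpower 4 d.

Lemma piece_constant_ge1 : 1 <= piece_constant.
Proof.
  destruct d_tuned as [hx _]. unfold piece_constant.
  assert (hxi : 1 <= /x) by (rewrite <- Rinv_1; apply Rinv_le_contravar; lra).
  assert (hq : 1 <= half_dim_factor d ^ (N0 + 1))
    by (apply pow_R1_Rle, half_dim_factor_ge1, d_nonneg).
  assert (h4 : 1 <= Rpower 4 d) by (rewrite <- (Rpower_O 4) by lra; apply Rle_Rpower; lra).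
  assert (1 <= /x * half_dim_factor d ^ (N0 + 1)) by nra.
  nra.
Qed.

(* Small scales: a ball of radius R around a point of a piece is a cluster
   of depth n = k+1-j, where r and min(R,1) lie in the shells of scales k and
   j, and the covering estimate for clusters gives the Assouad bound. *)
Lemma piece_ball_coverable (a r R : R) :
  sparse_piece M N0 a -> 0 < r < 1 -> r < R ->
  coverable (fun y => sparse_piece M N0 y /\ Rabs (y - a) <= R) r
    (piece_constant * Rpower (R / r) d).
Proof.
  intros ha hr hrR. pose proof d_tuned as [hx [hM _]].
  set (t := Rmin R 1).
  assert (ht : r < t <= 1) by (split; [apply Rmin_glb_lt; lra | apply Rmin_r]).
  destruct (dyadic_shell t ltac:(lra)) as [j hj].
  destruct (dyadic_shell r ltac:(lra)) as [k hk].
  assert (hjk : (j <= k)%nat).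
  { destruct (Nat.le_gt_cases j k) as [h | h]; [exact h|].
    pose proof (half_anti (S k) (j - S k)) as hanti.
    replace (S k + (j - S k))%nat with j in hanti by lia. lra. }
  set (n := (S k - j)%nat). assert (hjn : (j + n)%nat = S k) by (unfold n; lia).
  apply (coverable_weaken _ (cluster l a j n (S ((n + N0 + 1) / M))) _ ((/2)^(j + n))
    _ (cluster_bound x n (S ((n + N0 + 1) / M)))).
  - intros y [hy hya]. pose proof hy as [hly _]. split; [exact hly|]. split.
    + apply Rle_trans with t; [|apply hj]. apply Rmin_glb; [exact hya|].
      pose proof (l_unit y hly). pose proof (l_unit a (proj1 ha)). split_Rabs; lra.
    + exact (piece_count M N0 j n y hM hy).
  - rewrite hjn. lra.
  - eapply Rle_trans; [apply (cluster_bound_estimate d x M N0 n); [exact d_tuned|]|].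
    + apply Nat.Div0.mul_div_le.
    + apply Rle_trans with
        (2 * /x * half_dim_factor d ^ (N0 + 1) * (Rpower 4 d * Rpower (R / r) d));
        [|right; unfold piece_constant; ring].
      apply Rmult_le_compat_l.
      { pose proof (pow_le (half_dim_factor d) (N0 + 1)
          ltac:(pose proof (half_dim_factor_ge1 d d_nonneg); lra)).
        pose proof (Rinv_0_lt_compat x ltac:(lra)). nra. }
      unfold half_dim_factor. rewrite <- Rpower_plus. replace (d / 2 + d / 2) with d by field.
      apply dyadic_power_bound; [exact d_nonneg | lra |].
      apply (shell_ratio r R j k n); [apply hk | | exact hjn].
      apply Rlt_le_trans with t; [apply hj | apply Rmin_l].
  - apply (cluster_coverable l x hx). exact (proj1 ha).
Qed.

Lemma piece_admissible : assouad_admissible (sparse_piece M N0) d.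
Proof.
  split; [exact d_nonneg|]. exists piece_constant.
  pose proof piece_constant_ge1 as hC. split; [lra|].
  intros a r R ha hr hrR.
  destruct (Rlt_le_dec r 1) as [hr1 | hr1].
  - apply piece_ball_coverable; auto.
  - assert (hRr : 1 <= Rpower (R / r) d).
    { rewrite <- (Rpower_O (R / r)) by (apply Rdiv_lt_0_compat; lra).
      apply Rle_Rpower; [|exact d_nonneg].
      apply (Rmult_le_reg_r r); [exact hr|]. field_simplify; lra. }
    apply (coverable_weaken _ _ _ _ _ 1 (fun y hy => hy) (Rle_refl r)); [nra|].
    apply coverable_unit_interval; [|exact hr1].
    intros y [[hy _] _]. exact (l_unit y hy).
Qed.

End SparsePieces.

Lemma assouad_dim_exists (F : R -> Prop) (s : R) :
  assouad_admissible F s -> exists u, assouad_dim F u /\ u <= s.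
Proof.
  intro hs.
  set (E := fun v => exists s', assouad_admissible F s' /\ v = - s').
  assert (hbound : bound E) by (exists 0; intros v [s' [[hs' _] ->]]; lra).
  destruct (completeness E hbound (ex_intro _ (- s) (ex_intro _ s (conj hs eq_refl))))
    as [m [hm1 hm2]].
  exists (- m). split; [split|].
  - intros s' hs'. specialize (hm1 (- s') (ex_intro _ s' (conj hs' eq_refl))). lra.
  - intros m' hm'. enough (m <= - m') by lra.
    apply hm2. intros v [s' [hs' ->]]. specialize (hm' s' hs'). lra.
  - specialize (hm1 (- s) (ex_intro _ s (conj hs eq_refl))). lra.
Qed.

(* A supremum of Assouad dimensions is nonnegative (an empty family has no
   least upper bound at all). *)
Lemma lub_dims_nonneg (Fi : nat -> R -> Prop) (t : R) :
  is_lub (fun u => exists i, assouad_dim (Fi i) u) t -> 0 <= t.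
Proof.
  intros [hub hleast].
  destruct (classic (exists u i, assouad_dim (Fi i) u)) as [[u [i hu]] | hnone].
  - apply Rle_trans with u; [|apply hub; exists i; exact hu].
    apply (proj2 hu). intros s [hs _]. exact hs.
  - enough (t <= t - 1) by lra.
    apply hleast. intros u [i hu]. exfalso. apply hnone. exists u, i. exact hu.
Qed.

Lemma mod_assouad_dim_zero (F : R -> Prop) :
  (forall d, 0 < d -> exists Fi : nat -> R -> Prop,
     (forall y, F y -> exists i, Fi i y) /\ forall i, assouad_admissible (Fi i) d) ->
  mod_assouad_dim F 0.
Proof.
  intro hcover. split.
  - intros t [Fi [_ ht]]. exact (lub_dims_nonneg Fi t ht).
  - intros m hm. destruct (Rle_dec m 0) as [h | h]; [exact h|]. exfalso.
    destruct (hcover (m / 2) ltac:(lra)) as [Fi [hF hadm]].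
    set (D := fun u => exists i, assouad_dim (Fi i) u).
    assert (hD : forall u, D u -> u <= m / 2).
    { intros u [i [hu _]]. exact (hu _ (hadm i)). }
    destruct (assouad_dim_exists (Fi 0%nat) (m / 2) (hadm 0%nat)) as [u0 [hu0 _]].
    destruct (completeness D (ex_intro _ (m / 2) hD) (ex_intro _ u0 (ex_intro _ 0%nat hu0)))
      as [t ht].
    assert (htm : t <= m / 2) by (apply (proj2 ht); exact hD).
    assert (hmt : m <= t) by (apply hm; exists Fi; split; [exact hF | exact ht]).
    lra.
Qed.

Lemma super_sparse_mod_assouad_dim_zero (l : R -> Prop) :
  (forall y, l y -> 0 <= y <= 1) -> (forall a, l a -> super_sparse_near l a) ->
  mod_assouad_dim l 0.
Proof.
  intros l_unit hsparse. apply mod_assouad_dim_zero. intros d hd.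
  destruct (tuned_exists d hd) as [x [M hpar]].
  exists (sparse_piece l M). split.
  - intros a ha. pose proof hpar as [_ [hM _]].
    destruct (hsparse a ha (/ INR M)) as [N0 hN0].
    { apply Rinv_0_lt_compat, lt_0_INR. exact hM. }
    exists N0. split; [exact ha | exact hN0].
  - intro N0. apply (piece_admissible l l_unit d x M N0); [lra | exact hpar].
Qed.

Lemma singleton_admissible (c s : R) : 0 <= s -> assouad_admissible (fun y => y = c) s.
Proof.
  intro hs. split; [exact hs|]. exists 1. split; [lra|].
  intros y r R _ hr hrR. exists 1%nat. split.
  - exists [c]. split; [reflexivity|]. intros z [-> _]. exists c. split; [simpl; auto | lra].
  - rewrite Rmult_1_l. simpl INR.
    rewrite <- (Rpower_O (R / r)) at 1 by (apply Rdiv_lt_0_compat; lra).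
    apply Rle_Rpower; [|exact hs].
    apply (Rmult_le_reg_r r); [exact hr|]. field_simplify; lra.
Qed.

Definition dyadic_point (i : nat) : R := match i with O => 0 | S _ => (/2)^i end.

Lemma dyadic_mod_assouad_dim_zero : mod_assouad_dim dyadic_set 0.
Proof.
  apply mod_assouad_dim_zero. intros d hd.
  exists (fun i y => y = dyadic_point i). split.
  - intros y [-> | [k [hk ->]]].
    + exists 0%nat. reflexivity.
    + exists k. destruct k; [lia | reflexivity].
  - intro i. apply singleton_admissible. lra.
Qed.

Lemma dyadic_all_scales (k : nat) : W dyadic_set 0 k.
Proof.
  exists ((/2)^(S k)). split.
  - right. exists (S k). split; [lia | reflexivity].
  - rewrite Rminus_0_r, Rabs_pos_eq by (left; apply half_pos).
    rewrite half_S. pose proof (half_pos k). lra.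
Qed.

(* Second part, second half: all scales are occupied, so the density is 1. *)
Lemma dyadic_not_sparse : ~ sparse_near dyadic_set 0.
Proof.
  intro hsparse. destruct (hsparse (1 / 2) ltac:(lra)) as [N0 hN0].
  specialize (hN0 (S N0) ltac:(lia) ltac:(lia)).
  assert (hfull : forall N, countW (W dyadic_set 0) 0 N = INR N).
  { induction N as [|N IH]; [reflexivity|].
    simpl countW. rewrite IH, S_INR. unfold Defs.ind.
    destruct (excluded_middle_informative _) as [_ | hno]; [reflexivity|].
    exfalso. apply hno, dyadic_all_scales. }
  rewrite hfull in hN0.
  assert (0 < INR (S N0)) by (apply lt_0_INR; lia).
  replace (INR (S N0) / INR (S N0)) with 1 in hN0 by (field; lra). lra.
Qed.

Theorem proposition4p4 :
  (forall l : R -> Prop,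
     compact l ->
     (forall x, l x -> 0 <= x <= 1) ->
     (forall a, l a -> super_sparse_near l a) ->
     mod_assouad_dim l 0) /\
  (mod_assouad_dim dyadic_set 0 /\ ~ sparse_near dyadic_set 0).
Proof.
  split.
  - intros l _ l_unit hsparse. exact (super_sparse_mod_assouad_dim_zero l l_unit hsparse).
  - exact (conj dyadic_mod_assouad_dim_zero dyadic_not_sparse).
Qed.
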